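(* Let $q,n,a,h,t$ be positive integers with $a\le q-1$, $h\le n$, $a\le t\le ah$, and suppose $t+1$ divides $q$. For $j\in\{0,1,\dots,t\}$ let $$\mathcal C_q^{(j)}(n;t)=\Big\{\mathbf x\in[q]^n:\ \sum_{i=1}^n x_i\equiv j\pmod{t+1}\Big\}.$$ Then for every $j\in\{0,1,\dots,t\}$, $\mathcal C_q^{(j)}(n;t)$ is an optimal $(a,h,t)^\circ$-AED code in $[q]^n$, i.e., it is $(a,h,t)^\circ$-AED and no $(a,h,t)^\circ$-AED code in $[q]^n$ has larger cardinality (its cardinality being $\frac{q^n}{t+1}$).
   Context: $[q]=\{0,1,\dots,q-1\}$ and $+_q$ denotes coordinatewise addition modulo $q$. Cyclic asymmetric channel: an input $\mathbf x\in[q]^n$ can produce any output $\mathbf y=\mathbf x+_q\mathbf f$, where $\mathbf f\in[q]^n$ satisfies (1) $0\le f_i\le a$ for all $i$; (2) $\sum_{i=1}^n\mathbb 1_{\{f_i\ne0\}}\le h$; (3) $\sum_{i=1}^n f_i\le t$. These are called $(a,h,t)^\circ$-asymmetric errors; $\mathrm{Out}^\circ(\mathbf x)$ denotes the set of all such outputs. A code $\mathcal C\subseteq[q]^n$ is $(a,h,t)^\circ$-AED if for all $\mathbf x\in\mathcal C$ and $\mathbf y\in\mathrm{Out}^\circ(\mathbf x)$ with $\mathbf y\ne\mathbf x$, we have $\mathbf y\notin\mathcal C$. *)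

From mathcomp Require Import all_boot.
Set Implicit Arguments. Unset Strict Implicit. Unset Printing Implicit Defensive.

Definition word (q n : nat) := (n.-tuple 'I_q).

Definition cyc_out (q n a h t : nat) (x y : word q n) : Prop :=
  exists f : n.-tuple nat,
    [/\ forall i : 'I_n, tnth f i <= a,
        count (fun v => v != 0) f <= h,
        sumn f <= t
      & forall i : 'I_n, (val (tnth y i) = (val (tnth x i) + tnth f i) %% q)].

Definition cyc_AED (q n a h t : nat) (C : {set word q n}) : Prop :=
  forall x y : word q n, x \in C -> cyc_out a h t x y -> y != x -> y \notin C.

Definition sum_code (q n t j : nat) : {set word q n} :=
  [set x : word q n | (\sum_(i < n) val (tnth x i)) == j %[mod t.+1]].

Definition optimal_AED (q n a h t : nat) (C : {set word q n}) : Prop :=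
  cyc_AED a h t C /\
  forall C' : {set word q n}, cyc_AED a h t C' -> #|C'| <= #|C|.

From mathcomp Require Import all_boot zify.
Set Implicit Arguments. Unset Strict Implicit. Unset Printing Implicit Defensive.

(* Error-detection: as t+1 divides q, adding an error f shifts the coordinate
   sum by sumn f modulo t+1, and 0 < sumn f <= t for a nontrivial error, so
   the class of the sum changes.
   Optimality: let v_k (0 <= k <= t) fill the coordinates greedily with a's,
   v_k = (a, ..., a, k mod a, 0, ..., 0); it has weight k and support of size
   at most h since k <= a h.  For l <= k, v_k - v_l is again an admissible
   error, so x + v_k = x' + v_l with x, x' in an AED code C forces x' = x and
   then k = l.  Hence (x, k) |-> x + v_k is injective on C x {0..t}, giving
   |C| (t+1) <= q^n.  The t+1 sum classes partition [q]^n and each obeys this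
   bound, so each has exactly q^n/(t+1) words. *)

Section WordShift.

Variables q n : nat.
Hypothesis q_gt0 : 0 < q.

Definition addw (x : word q n) (d : nat -> nat) : word q n :=
  [tuple insubd (tnth x i) ((val (tnth x i) + d (val i)) %% q) | i < n].

Lemma val_addw x d i :
  val (tnth (addw x d) i) = (val (tnth x i) + d (val i)) %% q.
Proof. by rewrite tnth_mktuple val_insubd ltn_pmod. Qed.

Lemma addw_subr x x' (d e : nat -> nat) :
  (forall i : 'I_n, e i <= d i) ->
  addw x d = addw x' e -> x' = addw x (fun i => d i - e i).
Proof.
move=> le_ed Exx'; apply: eq_from_tnth => i; apply: val_inj.
have := congr1 (fun w => val (tnth w i)) Exx'.
rewrite /= !val_addw -{1}(subnK (le_ed i)) addnA => /eqP.
by rewrite eqn_modDr (modn_small (ltn_ord (tnth x' i))) => /eqP ->.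
Qed.

Lemma addw_fixed x (d : nat -> nat) :
  addw x d = x -> (forall i : 'I_n, d i < q) -> forall i : 'I_n, d i = 0.
Proof.
move=> Ex d_lt i; have := congr1 (fun w => val (tnth w i)) Ex.
rewrite /= val_addw => Exi.
have : val (tnth x i) + d i == val (tnth x i) + 0 %[mod q].
  by rewrite addn0 Exi (modn_small (ltn_ord _)).
by rewrite eqn_modDl mod0n modn_small // => /eqP.
Qed.

End WordShift.

Lemma count_iota_support (d : nat -> nat) h n :
  h <= n -> (forall i, h <= i -> d i = 0) ->
  count (fun i => d i != 0) (iota 0 n) <= h.
Proof.
move=> le_hn d0; rewrite -[X in _ <= X](size_iota 0 h) -(filter_iota_ltn 0 le_hn).
rewrite size_filter; apply: sub_count => i /=.
by apply: contraR; rewrite -leqNgt => /d0 ->.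
Qed.

Lemma cyc_out_addw q n a h t (x : word q n) (d : nat -> nat) : 0 < q ->
  h <= n -> (forall i, d i <= a) -> (forall i, h <= i -> d i = 0) ->
  \sum_(i < n) d i <= t -> cyc_out a h t x (addw x d).
Proof.
move=> q_gt0 le_hn d_le_a d0 sum_le_t.
have f_eq_map : [tuple d (val i) | i < n] = map d (iota 0 n) :> seq nat.
  by rewrite /= -val_enum_ord -map_comp.
exists [tuple d (val i) | i < n]; split.
- by move=> i; rewrite tnth_mktuple.
- by rewrite f_eq_map count_map; exact: count_iota_support.
- by rewrite sumnE big_tuple (eq_bigr _ (fun i _ => tnth_mktuple _ i)).
- by move=> i; rewrite val_addw // (tnth_mktuple (fun i : 'I_n => d (val i))).
Qed.

Definition greedy_err (a k i : nat) := minn a (k - a * i).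

Lemma greedy_err_le a k i : greedy_err a k i <= a.
Proof. exact: geq_minl. Qed.

Lemma greedy_err_mono a l k i :
  l <= k -> greedy_err a l i <= greedy_err a k i.
Proof. by rewrite /greedy_err; lia. Qed.

Lemma greedy_err_eq0 a k i : k <= a * i -> greedy_err a k i = 0.
Proof. by rewrite /greedy_err; lia. Qed.

Lemma sum_greedy_err_minn a k m :
  \sum_(i < m) greedy_err a k i = minn k (a * m).
Proof.
elim: m => [|m IHm]; first by rewrite big_ord0 muln0 minn0.
by rewrite big_ord_recr /= IHm /greedy_err; lia.
Qed.

Lemma sum_greedy_err a k m : k <= a * m -> \sum_(i < m) greedy_err a k i = k.
Proof. by rewrite sum_greedy_err_minn; lia. Qed.

Section AEDBound.

Variables q n a h t : nat.
Hypotheses (q_gt0 : 0 < q) (a_lt_q : a < q).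
Hypotheses (t_le_ah : t <= a * h) (h_le_n : h <= n).
Variable C : {set word q n}.
Hypothesis C_AED : cyc_AED a h t C.

Lemma greedy_shift_inj_le x x' k l : l <= k -> k <= t ->
  x \in C -> x' \in C ->
  addw x (greedy_err a k) = addw x' (greedy_err a l) -> x = x' /\ k = l.
Proof.
move=> le_lk le_kt Cx Cx' Exx'.
have k_le_an : k <= a * n.
  by rewrite (leq_trans le_kt) // (leq_trans t_le_ah) // leq_mul2l h_le_n orbT.
have l_le_an : l <= a * n := leq_trans le_lk k_le_an.
pose D i := greedy_err a k i - greedy_err a l i.
have D_le_a i : D i <= a by apply: leq_trans (leq_subr _ _) (greedy_err_le _ _ _).
have Ex' : x' = addw x D.
  by apply: (addw_subr q_gt0 _ Exx') => i; exact: greedy_err_mono.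
have out_x' : cyc_out a h t x x'.
  rewrite Ex'; apply: cyc_out_addw => // [i le_hi|].
  - have k_le_ai : k <= a * i.
      by rewrite (leq_trans le_kt) // (leq_trans t_le_ah) // leq_mul2l le_hi orbT.
    by rewrite /D !greedy_err_eq0 // (leq_trans le_lk).
  - rewrite -(sum_greedy_err k_le_an) in le_kt; apply: leq_trans le_kt.
    by apply: leq_sum => i _; exact: leq_subr.
have x'x : x' = x.
  by apply/eqP; apply: contraLR Cx' => /(C_AED Cx out_x').
have D0 : forall i : 'I_n, D i = 0.
  apply: (addw_fixed q_gt0 (etrans (esym Ex') x'x)) => i.
  exact: leq_ltn_trans (D_le_a i) a_lt_q.
split=> //; rewrite -(sum_greedy_err k_le_an) -(sum_greedy_err l_le_an).
apply: eq_bigr => i _; apply/eqP; rewrite eqn_leq andbC greedy_err_mono //=.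
by rewrite -subn_eq0; apply/eqP; exact: D0.
Qed.

Lemma greedy_shift_inj x x' k l : k <= t -> l <= t ->
  x \in C -> x' \in C ->
  addw x (greedy_err a k) = addw x' (greedy_err a l) -> x = x' /\ k = l.
Proof.
move=> le_kt le_lt Cx Cx' Exx'; case: (leqP l k) => [le_lk|/ltnW le_kl].
  exact: greedy_shift_inj_le.
by have [-> ->] := greedy_shift_inj_le le_kl le_lt Cx' Cx (esym Exx').
Qed.

Lemma AED_card_bound : #|C| * t.+1 <= q ^ n.
Proof.
pose shift (p : word q n * 'I_t.+1) := addw p.1 (greedy_err a p.2).
have shift_inj : {in setX C [set: 'I_t.+1] &, injective shift}.
  move=> [x k] [x' l] /setXP[Cx _] /setXP[Cx' _] /= Eshift.
  have [-> Ekl] := greedy_shift_inj (ltn_ord k) (ltn_ord l) Cx Cx' Eshift.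
  by congr pair; apply: val_inj.
have := @leq_card_in _ _ shift (setX C [set: 'I_t.+1]) shift_inj.
by rewrite cardsX cardsT !card_ord card_tuple card_ord.
Qed.

End AEDBound.

Lemma modn_sum_dvdm (I : finType) (F : I -> nat) q d : d %| q ->
  \sum_(i : I) (F i %% q) = \sum_(i : I) F i %[mod d].
Proof.
move=> dvd_dq; rewrite -[LHS]modn_summ -[RHS]modn_summ.
by congr (_ %% _); apply: eq_bigr => i _; rewrite modn_dvdm.
Qed.

Lemma sum_code_AED q n a h t j : 0 < q -> t.+1 %| q ->
  cyc_AED a h t (sum_code q n t j).
Proof.
move=> q_gt0 dvd_q x y; rewrite !inE => /eqP sum_x [f [_ _ le_ft Ey]] y_neq_x.
apply: contra y_neq_x => /eqP sum_y.
have sum_f_mod : \sum_(i < n) val (tnth x i) + sumn f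
                 = \sum_(i < n) val (tnth x i) + 0 %[mod t.+1].
  rewrite addn0 sum_x -sum_y (eq_bigr _ (fun i _ => Ey i)) modn_sum_dvdm //.
  by rewrite sumnE big_tuple -big_split.
have f0 : sumn f = 0.
  by move/eqP: sum_f_mod; rewrite eqn_modDl mod0n modn_small // => /eqP.
have fi0 i : tnth f i = 0.
  by move/eqP: f0; rewrite sumnE big_tuple sum_nat_eq0 => /forallP/(_ i)/eqP.
apply/eqP; apply: eq_from_tnth => i; apply: val_inj.
by rewrite Ey fi0 addn0 (modn_small (ltn_ord _)).
Qed.

Lemma sum_card_sum_code q n t : \sum_(j < t.+1) #|sum_code q n t j| = q ^ n.
Proof.
pose cls (x : word q n) : 'I_t.+1 := inord ((\sum_(i < n) val (tnth x i)) %% t.+1).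
have -> : q ^ n = \sum_(x : word q n) 1 by rewrite sum1_card card_tuple card_ord.
rewrite (partition_big cls predT) //; apply: eq_bigr => j _.
rewrite -sum1_card; apply: eq_bigl => x.
by rewrite inE -val_eqE /= inordK ?ltn_mod // (modn_small (ltn_ord j)).
Qed.

Lemma eq_bounded_sum (I : finType) (F : I -> nat) M :
  (forall i, F i <= M) -> \sum_(i : I) F i = #|I| * M -> forall i, F i = M.
Proof.
move=> le_FM sum_F i.
have [_] := @leqif_sum I predT (fun i => F i == M) F (fun=> M)
  (fun i _ => leqif_eq (le_FM i)).
by rewrite sum_nat_const sum_F eqxx => /esym/forall_inP/(_ i isT)/eqP.
Qed.

Theorem theorem6 (q n a h t : nat) :
  0 < q -> 0 < n -> 0 < a -> 0 < h -> 0 < t ->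
  a <= q - 1 -> h <= n -> a <= t -> t <= a * h ->
  t.+1 %| q ->
  forall j : nat, j <= t ->
    optimal_AED a h t (sum_code q n t j) /\
    #|sum_code q n t j| = q ^ n %/ t.+1.
Proof.
move=> q_gt0 n_gt0 _ _ _ a_le_q1 h_le_n _ t_le_ah dvd_q j le_jt.
have a_lt_q : a < q by lia.
have bound (C : {set word q n}) : cyc_AED a h t C -> #|C| <= q ^ n %/ t.+1.
  by move=> C_AED; rewrite leq_divRL //; exact: AED_card_bound C_AED.
have card_classes : forall i : 'I_t.+1, #|sum_code q n t i| = q ^ n %/ t.+1.
  apply: eq_bounded_sum => [i|]; first exact/bound/sum_code_AED.
  by rewrite sum_card_sum_code card_ord mulnC divnK // dvdn_exp.
have card_j : #|sum_code q n t j| = q ^ n %/ t.+1.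
  exact: card_classes (Ordinal (le_jt : j < t.+1)).
split=> //; split; first exact: sum_code_AED.
by move=> C' /bound; rewrite card_j.
Qed.
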